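(* Let $X$ be a locally compact Hausdorff space, $\tau$ a topological measure on $X$, and $O\in\mathcal O(X)$. Let $\widehat O=O\cup\{\infty\}$ be the one-point compactification of $O$, so that the open subsets of $\widehat O$ are the open $U\subset O$ and the sets $(O- K)\cup\{\infty\}$ with $K\subset O$ compact, and the compact subsets of $\widehat O$ are the compact $K\subset O$ and the sets $(O- U)\cup\{\infty\}$ with $U\subset O$ open. Define $\widehat\tau_O$ on $\mathcal A(\widehat O)$ by $\widehat\tau_O(U)=\tau(U)$, $\widehat\tau_O(K)=\tau(K)$, $\widehat\tau_O((O- K)\cup\{\infty\})=\tau(O- K)$, $\widehat\tau_O((O- U)\cup\{\infty\})=\tau(O)-\tau(U)$ for $U\subset O$ open and $K\subset O$ compact. Then $\widehat\tau_O$ is a topological measure on $\widehat O$.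
   Context: For a locally compact Hausdorff space $Y$: $\mathcal K(Y)$ is the family of compact subsets, $\mathcal O(Y)$ the family of open subsets with compact closure, $\mathcal A(Y)=\mathcal K(Y)\cup\mathcal O(Y)$ (for compact $Y$, $\mathcal O(Y)$ is all open sets). A topological measure on $Y$ is a function $\tau:\mathcal A(Y)\to[0,\infty)$ such that: (additivity) $\tau(A\cup A')=\tau(A)+\tau(A')$ whenever $A,A'\in\mathcal A(Y)$ are disjoint and $A\cup A'\in\mathcal A(Y)$; (monotonicity) $\tau(A)\le\tau(A')$ for $A\subset A'$ in $\mathcal A(Y)$; (regularity) $\tau(K)=\inf\{\tau(O)\mid O\in\mathcal O(Y),O\supset K\}$ for $K\in\mathcal K(Y)$ and $\tau(O)=\sup\{\tau(K)\mid K\in\mathcal K(Y),K\subset O\}$ for $O\in\mathcal O(Y)$. *)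

From Stdlib Require Import Reals List.
Open Scope R_scope.

Definition subset {Y : Type} (A B : Y -> Prop) : Prop := forall y, A y -> B y.
Definition setminus {Y : Type} (A B : Y -> Prop) : Y -> Prop := fun y => A y /\ ~ B y.
Definition setU {Y : Type} (A B : Y -> Prop) : Y -> Prop := fun y => A y \/ B y.
Definition disjoint {Y : Type} (A B : Y -> Prop) : Prop := forall y, A y -> B y -> False.

Definition is_topology {Y : Type} (opn : (Y -> Prop) -> Prop) : Prop :=
  opn (fun _ => True) /\ opn (fun _ => False) /\
  (forall U V, opn U -> opn V -> opn (fun y => U y /\ V y)) /\
  (forall F : (Y -> Prop) -> Prop, (forall U, F U -> opn U) ->
     opn (fun y => exists U, F U /\ U y)).

Definition is_compact {Y : Type} (opn : (Y -> Prop) -> Prop) (K : Y -> Prop) : Prop :=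
  forall F : (Y -> Prop) -> Prop,
    (forall U, F U -> opn U) ->
    (forall y, K y -> exists U, F U /\ U y) ->
    exists l : list (Y -> Prop),
      (forall U, In U l -> F U) /\ (forall y, K y -> exists U, In U l /\ U y).

Definition closed {Y : Type} (opn : (Y -> Prop) -> Prop) (C : Y -> Prop) : Prop :=
  opn (fun y => ~ C y).

Definition closure {Y : Type} (opn : (Y -> Prop) -> Prop) (A : Y -> Prop) : Y -> Prop :=
  fun y => forall C, closed opn C -> subset A C -> C y.

Definition hausdorff {Y : Type} (opn : (Y -> Prop) -> Prop) : Prop :=
  forall x y : Y, x <> y -> exists U V, opn U /\ opn V /\ U x /\ V y /\ disjoint U V.

Definition locally_compact {Y : Type} (opn : (Y -> Prop) -> Prop) : Prop :=
  forall x : Y, exists U, opn U /\ U x /\ is_compact opn (closure opn U).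

Definition KY {Y : Type} (opn : (Y -> Prop) -> Prop) (K : Y -> Prop) : Prop := is_compact opn K.
Definition OY {Y : Type} (opn : (Y -> Prop) -> Prop) (U : Y -> Prop) : Prop :=
  opn U /\ is_compact opn (closure opn U).
Definition AY {Y : Type} (opn : (Y -> Prop) -> Prop) (A : Y -> Prop) : Prop :=
  KY opn A \/ OY opn A.

Definition is_glb (E : R -> Prop) (m : R) : Prop :=
  (forall x, E x -> m <= x) /\ (forall b, (forall x, E x -> b <= x) -> b <= m).

(* topological measure: tau : A(Y) -> [0,oo); values of tau outside A(Y) are irrelevant *)
Definition topological_measure {Y : Type} (opn : (Y -> Prop) -> Prop)
    (tau : (Y -> Prop) -> R) : Prop :=
  (forall A, AY opn A -> 0 <= tau A) /\
  (forall A A', AY opn A -> AY opn A' -> disjoint A A' -> AY opn (setU A A') ->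
     tau (setU A A') = tau A + tau A') /\
  (forall A A', AY opn A -> AY opn A' -> subset A A' -> tau A <= tau A') /\
  (forall K, KY opn K ->
     is_glb (fun r => exists U, OY opn U /\ subset K U /\ r = tau U) (tau K)) /\
  (forall U, OY opn U ->
     is_lub (fun r => exists K, KY opn K /\ subset K U /\ r = tau K) (tau U)).

(* One-point compactification of O: carrier option {x | O x}, None = infinity. *)
Definition trace {X : Type} {O : X -> Prop} (V : option {x : X | O x} -> Prop) : X -> Prop :=
  fun x => exists h : O x, V (Some (exist _ x h)).

Definition lift {X : Type} (O : X -> Prop) (A : X -> Prop) (inf : Prop)
  : option {x : X | O x} -> Prop :=
  fun p => match p with None => inf | Some x => A (proj1_sig x) end.

Definition hat_open {X : Type} (opn : (X -> Prop) -> Prop) (O : X -> Prop)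
    (V : option {x : X | O x} -> Prop) : Prop :=
  (~ V None /\ opn (trace V)) \/
  (V None /\ is_compact opn (setminus O (trace V))).

(* The one-point compactification [O-hat] is compact, its open sets not containing
   [oo] are the open subsets of [O], and (using local compactness and the Hausdorff
   property of [X]) its compact sets containing [oo] are exactly [(O - U) + oo] with
   [U] open in [O].  Hence every [A] in [A(O-hat)] either avoids [oo], and then
   [tauh A = tau A], or contains [oo], and then [tauh A = tau O - tau (O - A)] with
   [O - A] in [A(X)].  Each axiom of a topological measure for [tauh] then reduces
   to the corresponding axiom for [tau], the only extra ingredient being
   [tau T + tau C <= tau O] for disjoint [T, C] in [A(X)] inside [O], obtained by
   inner regularity from finite additivity on compact sets. *)
From Stdlib Require Import Reals Lra List Classical FunctionalExtensionality PropExtensionality ProofIrrelevance.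
Open Scope R_scope.

Lemma pred_ext {Y : Type} (A B : Y -> Prop) : (forall y, A y <-> B y) -> A = B.
Proof.
  intro H; apply functional_extensionality; intro y; apply propositional_extensionality; auto.
Qed.

Lemma notnot_pred {Y : Type} (P : Y -> Prop) : (fun y => ~ ~ P y) = P.
Proof. apply pred_ext; intro; split; [apply NNPP | auto]. Qed.

Lemma list_choice {A B : Type} (P : A -> B -> Prop) (l : list A) :
  (forall a, In a l -> exists b, P a b) ->
  exists l', (forall b, In b l' -> exists a, In a l /\ P a b) /\
             (forall a, In a l -> exists b, In b l' /\ P a b).
Proof.
  induction l as [|a l IH]; intro H.
  - exists nil. split; intros ? [].
  - destruct IH as [l' [H1 H2]]. { intros a' Ha'; apply H; right; auto. }
    destruct (H a (or_introl eq_refl)) as [b Hb].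
    exists (b :: l'). split.
    + intros b' [<-|Hb'].
      * exists a; split; auto. left; auto.
      * destruct (H1 b' Hb') as [a' [? ?]]. exists a'; split; auto. right; auto.
    + intros a' [<-|Ha'].
      * exists b; split; auto. left; auto.
      * destruct (H2 a' Ha') as [b' [? ?]]. exists b'; split; auto. right; auto.
Qed.

Lemma list_filter_prop {A : Type} (F : A -> Prop) (l : list A) :
  exists l', (forall a, In a l' -> F a) /\ (forall a, In a l -> F a -> In a l').
Proof.
  induction l as [|a l IH].
  - exists nil. split; intros ? [].
  - destruct IH as [l' [H1 H2]]. destruct (classic (F a)) as [Fa|nFa].
    + exists (a :: l'). split.
      * intros b [<-|Hb]; auto.
      * intros b [<-|Hb] Fb; [left; auto | right; auto].
    + exists l'. split; auto. intros b [<-|Hb] Fb; [contradiction | auto].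
Qed.

Section Topology.

Context {Y : Type} (opn : (Y -> Prop) -> Prop).
Hypothesis Htop : is_topology opn.

Lemma open_inter U V : opn U -> opn V -> opn (fun y => U y /\ V y).
Proof. apply Htop. Qed.

Lemma open_of_local_nbhd (A : Y -> Prop) :
  (forall x, A x -> exists U, opn U /\ U x /\ subset U A) -> opn A.
Proof.
  intro H. destruct Htop as [_ [_ [_ Hun]]].
  assert (E : (fun y => exists U, (fun U => opn U /\ subset U A) U /\ U y) = A).
  { apply pred_ext. intro y; split.
    - intros [U [[_ HUA] HUy]]. apply HUA, HUy.
    - intro Hy. destruct (H y Hy) as [U [HU [HUy HUA]]]. exists U; auto. }
  rewrite <- E. apply Hun. intros U [HU _]; exact HU.
Qed.

Lemma compact_separate_point (K : Y -> Prop) (x : Y) :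
  is_compact opn K ->
  (forall y, K y -> exists U P, opn U /\ opn P /\ U y /\ P x /\ disjoint U P) ->
  exists Q P, opn Q /\ opn P /\ P x /\ subset K Q /\ disjoint Q P.
Proof.
  intros HK H.
  destruct (HK (fun U => opn U /\ exists P, opn P /\ P x /\ disjoint U P)) as [l [Hl Hcov]].
  - intros U [HU _]; exact HU.
  - intros y Hy. destruct (H y Hy) as [U [P [HU [HP [HUy [HPx Hd]]]]]].
    exists U. split; [split; [exact HU | exists P; auto] | exact HUy].
  - assert (HP : exists P, opn P /\ P x /\ forall U, In U l -> disjoint U P).
    { clear Hcov. induction l as [|U l IH].
      - exists (fun _ => True). repeat split; [apply Htop | intros U []].
      - destruct IH as [P [HP [HPx HPd]]]. { intros V HV; apply Hl; right; exact HV. }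
        destruct (Hl U (or_introl eq_refl)) as [_ [P' [HP' [HP'x Hd']]]].
        exists (fun y => P y /\ P' y). split; [apply open_inter; auto |]. split; [auto |].
        intros V [<-|HV] y HVy [Py P'y].
        + exact (Hd' y HVy P'y).
        + exact (HPd V HV y HVy Py). }
    destruct HP as [P [HP [HPx HPd]]].
    exists (fun y => exists U, In U l /\ U y), P. split.
    + destruct Htop as [_ [_ [_ Hun]]]. apply (Hun (fun U => In U l)).
      intros U HU; apply (Hl U HU).
    + split; auto. split; auto. split.
      * intros y Hy. exact (Hcov y Hy).
      * intros y [U [HU HUy]] Py. exact (HPd U HU y HUy Py).
Qed.

Lemma compact_complement_open (K : Y -> Prop) :
  hausdorff opn -> is_compact opn K -> opn (fun y => ~ K y).
Proof.
  intros Hh HK. apply open_of_local_nbhd. intros x Hx.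
  destruct (compact_separate_point K x HK) as [Q [P [HQ [HP [HPx [HKQ Hd]]]]]].
  - intros y Hy. assert (Hne : x <> y) by (intro; subst; auto).
    destruct (Hh x y Hne) as [U [V [HU [HV [HUx [HVy Hd]]]]]].
    exists V, U. repeat split; auto. intros z Vz Uz; exact (Hd z Uz Vz).
  - exists P. split; auto. split; auto. intros y Py Ky. exact (Hd y (HKQ y Ky) Py).
Qed.

Lemma closure_complement_open (A : Y -> Prop) : opn (fun y => ~ closure opn A y).
Proof.
  apply open_of_local_nbhd. intros x Hx. unfold closure in Hx.
  apply not_all_ex_not in Hx as [C HC].
  apply imply_to_and in HC as [HC1 HC2]. apply imply_to_and in HC2 as [HC2 HC3].
  exists (fun y => ~ C y). split; [exact HC1 |]. split; auto.
  intros y nCy Hcy. apply nCy, Hcy; auto.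
Qed.

End Topology.

Lemma compact_inter_closed {Y : Type} (opn : (Y -> Prop) -> Prop) (K C : Y -> Prop) :
  is_compact opn K -> closed opn C -> is_compact opn (fun y => K y /\ C y).
Proof.
  intros HK HC F HF Hcov.
  destruct (HK (fun U => F U \/ U = (fun y => ~ C y))) as [l [Hl Hc]].
  - intros U [HU | ->]; auto.
  - intros y Ky. destruct (classic (C y)) as [Cy|nCy].
    + destruct (Hcov y (conj Ky Cy)) as [U [HU HUy]]. exists U; auto.
    + exists (fun y => ~ C y); auto.
  - destruct (list_filter_prop F l) as [l' [Hl'1 Hl'2]]. exists l'. split; auto.
    intros y [Ky Cy]. destruct (Hc y Ky) as [U [HU HUy]].
    destruct (Hl U HU) as [HFU | E].
    + exists U; auto.
    + subst U. contradiction.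
Qed.

Lemma compact_setU {Y : Type} (opn : (Y -> Prop) -> Prop) (K K' : Y -> Prop) :
  is_compact opn K -> is_compact opn K' -> is_compact opn (setU K K').
Proof.
  intros HK HK' F HF Hcov.
  destruct (HK F HF) as [l [Hl Hc]]. { intros y Hy; apply Hcov; left; auto. }
  destruct (HK' F HF) as [l' [Hl' Hc']]. { intros y Hy; apply Hcov; right; auto. }
  exists (l ++ l'). split.
  - intros U HU; apply in_app_or in HU; destruct HU; auto.
  - intros y [Hy|Hy];
      [destruct (Hc y Hy) as [U [? ?]] | destruct (Hc' y Hy) as [U [? ?]]];
      exists U; split; auto; apply in_or_app; auto.
Qed.

Lemma closure_mono {Y : Type} (opn : (Y -> Prop) -> Prop) (A B : Y -> Prop) :
  subset A B -> subset (closure opn A) (closure opn B).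
Proof. intros Hab y Hy C HC HBC; apply Hy; auto; intros z Az; apply HBC, Hab, Az. Qed.

Lemma subset_closure {Y : Type} (opn : (Y -> Prop) -> Prop) (A : Y -> Prop) :
  subset A (closure opn A).
Proof. intros y Ay C HC HAC; apply HAC; auto. Qed.

Lemma compact_closure_subset {Y : Type} (opn : (Y -> Prop) -> Prop) (O A : Y -> Prop) :
  is_topology opn -> is_compact opn (closure opn O) -> subset A O ->
  is_compact opn (closure opn A).
Proof.
  intros Ht HO HAO.
  assert (E : (fun y => closure opn O y /\ closure opn A y) = closure opn A).
  { apply pred_ext; intro y; split; [tauto |]. intro H; split; auto.
    exact (closure_mono opn A O HAO y H). }
  rewrite <- E. apply compact_inter_closed; auto.
  unfold closed. apply closure_complement_open; auto.
Qed.

Lemma compact_space_closure {Y : Type} (opn : (Y -> Prop) -> Prop) (V : Y -> Prop) :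
  is_compact opn (fun _ => True) -> is_compact opn (closure opn V).
Proof.
  intros HT F HF Hcov.
  destruct (HT (fun U => F U \/ exists C, closed opn C /\ subset V C /\ U = (fun y => ~ C y)))
    as [l [Hl Hc]].
  - intros U [HU | [C [HC [_ E]]]]; auto. subst U; exact HC.
  - intros y _. destruct (classic (closure opn V y)) as [Hy|Hy].
    + destruct (Hcov y Hy) as [U [? ?]]; exists U; auto.
    + unfold closure in Hy. apply not_all_ex_not in Hy as [C HC].
      apply imply_to_and in HC as [HC1 HC2]. apply imply_to_and in HC2 as [HC2 HC3].
      exists (fun y => ~ C y). split; auto. right. exists C; auto.
  - destruct (list_filter_prop F l) as [l' [Hl'1 Hl'2]]. exists l'. split; auto.
    intros y Hy. destruct (Hc y I) as [U [HU HUy]].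
    destruct (Hl U HU) as [HFU | [C [HC [HVC E]]]].
    + exists U; auto.
    + subst U. exfalso. apply HUy. apply Hy; auto.
Qed.

(* [R] plays the role of a continuous surjection from [K1] onto [K2]; a relation is
   used because the maps between [X] and the one-point compactification are partial. *)
Lemma compact_image_rel {Y1 Y2 : Type} (opn1 : (Y1 -> Prop) -> Prop)
  (opn2 : (Y2 -> Prop) -> Prop) (R : Y1 -> Y2 -> Prop) (K1 : Y1 -> Prop) (K2 : Y2 -> Prop) :
  is_compact opn1 K1 ->
  (forall U, opn2 U -> opn1 (fun y1 => exists y2, R y1 y2 /\ U y2)) ->
  (forall y1, K1 y1 -> exists y2, R y1 y2 /\ K2 y2) ->
  (forall y2, K2 y2 -> exists y1, K1 y1 /\ R y1 y2) ->
  (forall y1 y2 y2', R y1 y2 -> R y1 y2' -> y2 = y2') ->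
  is_compact opn2 K2.
Proof.
  intros HK Hopn H12 H21 Hfun F2 HF2 Hcov2.
  set (pre U := fun y1 => exists y2, R y1 y2 /\ U y2).
  destruct (HK (fun W => exists U, F2 U /\ W = pre U)) as [l1 [Hl1 Hc1]].
  - intros W [U [HU ->]]. apply Hopn, HF2, HU.
  - intros y1 Hy1. destruct (H12 y1 Hy1) as [y2 [HR HK2]].
    destruct (Hcov2 y2 HK2) as [U [HU HUy]].
    exists (pre U). split; [exists U; auto | exists y2; auto].
  - destruct (list_choice (fun W U => F2 U /\ W = pre U) l1 Hl1) as [l2 [Hl2a Hl2b]].
    exists l2. split.
    + intros U HU. destruct (Hl2a U HU) as [W [_ [? _]]]; auto.
    + intros y2 Hy2. destruct (H21 y2 Hy2) as [y1 [Hy1 HR]].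
      destruct (Hc1 y1 Hy1) as [W [HW HWy]].
      destruct (Hl2b W HW) as [U [HU [_ ->]]].
      destruct HWy as [y2' [HR' HU']]. exists U; split; auto.
      rewrite (Hfun y1 y2 y2' HR HR'); auto.
Qed.

Lemma compact_nbhd_in_open {X : Type} (opn : (X -> Prop) -> Prop) (O : X -> Prop) x :
  is_topology opn -> hausdorff opn -> locally_compact opn -> opn O -> O x ->
  exists N K, opn N /\ is_compact opn K /\ N x /\ subset N K /\ subset K O.
Proof.
  intros Htop Hh Hlc HO Ox. destruct (Hlc x) as [W [HW [HWx HC]]].
  assert (HD : is_compact opn (fun y => closure opn W y /\ ~ O y)).
  { apply compact_inter_closed; auto. unfold closed. rewrite notnot_pred. auto. }
  destruct (compact_separate_point opn Htop _ x HD) as [Q [P [HQ [HP [HPx [HDQ Hd]]]]]].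
  - intros y [_ Hy]. assert (Hne : y <> x) by (intro; subst; auto).
    destruct (Hh y x Hne) as [U [P [? [? [? [? ?]]]]]]. exists U, P; auto.
  - exists (fun y => W y /\ P y), (fun y => closure opn W y /\ ~ Q y).
    split; [apply open_inter; auto |].
    split; [apply compact_inter_closed; auto; unfold closed; rewrite notnot_pred; auto |].
    split; [auto |]. split.
    + intros y [Wy Py]. split; [apply subset_closure; auto | intro Qy; exact (Hd y Qy Py)].
    + intros y [Cy nQ]. apply NNPP; intro nO. apply nQ, HDQ; split; auto.
Qed.

Section OnePointCompactification.

Context {X : Type} (opn : (X -> Prop) -> Prop) (O : X -> Prop).
Hypothesis Htop : is_topology opn.
Hypothesis Hh : hausdorff opn.
Hypothesis Hlc : locally_compact opn.
Hypothesis HOo : opn O.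

Notation hat := (option {x : X | O x}).

Lemma trace_lift (A : X -> Prop) (b : Prop) : trace (lift O A b) = (fun x => O x /\ A x).
Proof.
  apply pred_ext; intro x; unfold trace, lift; simpl; split.
  - intros [h H]; auto.
  - intros [h H]; exists h; exact H.
Qed.

Lemma trace_Some (V : hat -> Prop) x (h : O x) : trace V x -> V (Some (exist _ x h)).
Proof. intros [h' H]. rewrite (proof_irrelevance _ h h'); exact H. Qed.

Lemma trace_subset (V : hat -> Prop) : subset (trace V) O.
Proof. intros x [h _]; exact h. Qed.

Lemma setminus_subset (A : X -> Prop) : subset (setminus O A) O.
Proof. intros x [h _]; exact h. Qed.

Lemma setminus_setminus (K : X -> Prop) :
  subset K O -> setminus O (fun x => O x /\ setminus O K x) = K.
Proof.
  intro HK. apply pred_ext; intro x; unfold setminus; split.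
  - intros [Ox n]. apply NNPP; intro nK; apply n; split; auto.
  - intro Kx; split; [apply HK; auto | intros [_ [_ n]]; auto].
Qed.

Lemma lift_trace (V : hat -> Prop) : ~ V None -> V = lift O (trace V) False.
Proof.
  intro HV. apply pred_ext; intros [[x h]|]; simpl.
  - split; [intro; exists h; auto | apply trace_Some].
  - split; [auto | intros []].
Qed.

Lemma lift_trace_inf (V : hat -> Prop) :
  V None -> V = lift O (setminus O (setminus O (trace V))) True.
Proof.
  intro HV. apply pred_ext; intros [[x h]|]; simpl; unfold setminus.
  - split.
    + intro H; split; auto. intros [_ H']; apply H'; exists h; auto.
    + intros [_ H]; apply trace_Some. apply NNPP; intro; apply H; split; auto.
  - tauto.
Qed.

Lemma hat_open_trace (V : hat -> Prop) : hat_open opn O V -> opn (trace V).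
Proof.
  intros [[_ H]|[_ H]]; auto.
  assert (E : (fun x => O x /\ ~ setminus O (trace V) x) = trace V).
  { apply pred_ext; intro x; unfold setminus; split.
    - intros [Ox n]. apply NNPP; intro nt; apply n; split; auto.
    - intros [h Hv]; split; auto. intros [_ n]; apply n; exists h; auto. }
  rewrite <- E. apply open_inter; auto. apply compact_complement_open; auto.
Qed.

Lemma hat_open_lift (U : X -> Prop) : opn U -> hat_open opn O (lift O U False).
Proof.
  intro HU. left; split; [simpl; tauto |]. rewrite trace_lift. apply open_inter; auto.
Qed.

Lemma hat_open_lift_co (K : X -> Prop) :
  is_compact opn K -> subset K O -> hat_open opn O (lift O (setminus O K) True).
Proof.
  intros HK HKO. right; split; [simpl; auto |]. rewrite trace_lift, setminus_setminus; auto.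
Qed.

Lemma hat_compact_trace (A : hat -> Prop) :
  is_compact (hat_open opn O) A -> ~ A None -> is_compact opn (trace A).
Proof.
  intros HA HN.
  apply (compact_image_rel (hat_open opn O) opn
           (fun p x => exists h, p = Some (exist _ x h)) A (trace A) HA).
  - intros U HU.
    assert (E : (fun p => exists x, (exists h, p = Some (exist _ x h)) /\ U x)
              = lift O U False).
    { apply pred_ext; intros [[x h]|]; simpl; split.
      - intros [y [[h' E] Hu]]. injection E; intros; subst; auto.
      - intro Hu; exists x; split; auto. exists h; auto.
      - intros [y [[h' E] Hu]]. discriminate.
      - intros []. }
    rewrite E. apply hat_open_lift; auto.
  - intros [[x h]|] Hp; [| contradiction]. exists x; split; exists h; auto.
  - intros x [h Hx]. exists (Some (exist _ x h)). split; auto. exists h; auto.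
  - intros p x x' [h E] [h' E']. subst p. injection E'; auto.
Qed.

Lemma compact_lift (K : X -> Prop) :
  is_compact opn K -> subset K O -> is_compact (hat_open opn O) (lift O K False).
Proof.
  intros HK HKO.
  apply (compact_image_rel opn (hat_open opn O)
           (fun x p => exists h, p = Some (exist _ x h)) K (lift O K False) HK).
  - intros V HV.
    assert (E : (fun x => exists p, (exists h, p = Some (exist _ x h)) /\ V p) = trace V).
    { apply pred_ext; intro x; split.
      - intros [p [[h E] Hv]]; subst p; exists h; auto.
      - intros [h Hv]. exists (Some (exist _ x h)); split; auto. exists h; auto. }
    rewrite E. apply hat_open_trace; auto.
  - intros x Kx. exists (Some (exist _ x (HKO x Kx))). split; [eexists; eauto | simpl; auto].
  - intros [[x h]|] Hp; simpl in Hp; [| contradiction]. exists x; split; auto. exists h; auto.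
  - intros x p p' [h E] [h' E']. subst. rewrite (proof_irrelevance _ h h'); auto.
Qed.

(* A cover of [(O - U) + oo] has a member [V0] containing [oo]; what [V0] misses is
   the compact set [(O - trace V0) - U], covered by finitely many members. *)
Lemma compact_lift_co (U : X -> Prop) :
  opn U -> is_compact (hat_open opn O) (lift O (setminus O U) True).
Proof.
  intros HU F HF Hcov.
  destruct (Hcov None I) as [V0 [HV0 HV0N]].
  assert (HK0 : is_compact opn (setminus O (trace V0))).
  { destruct (HF V0 HV0) as [[n _]|[_ H]]; [contradiction | exact H]. }
  assert (HK1 : is_compact opn (fun x => setminus O (trace V0) x /\ ~ U x)).
  { apply compact_inter_closed; auto. unfold closed. rewrite notnot_pred; auto. }
  destruct (compact_lift _ HK1 (fun x Hx => proj1 (proj1 Hx)) F HF) as [l [Hl Hc]].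
  - intros [[x h]|] Hp; simpl in Hp; [| contradiction].
    apply Hcov. simpl. unfold setminus in *. tauto.
  - exists (V0 :: l). split.
    + intros V [<-|HV]; auto.
    + intros [[x h]|] Hp.
      * destruct (classic (trace V0 x)) as [Ht|Ht].
        -- exists V0; split; [left; auto | apply trace_Some; auto].
        -- destruct (Hc (Some (exist _ x h))) as [V [HV HVp]].
           ++ simpl in *. unfold setminus in *. tauto.
           ++ exists V; split; [right |]; auto.
      * exists V0; split; [left |]; auto.
Qed.

Lemma hat_compact_space : is_compact (hat_open opn O) (fun _ => True).
Proof.
  assert (E : lift O (setminus O (fun _ => False)) True = (fun _ => True)).
  { apply pred_ext; intros [[x h]|]; simpl; unfold setminus; tauto. }
  rewrite <- E. apply compact_lift_co. apply Htop.
Qed.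

Lemma hat_open_OY (V : hat -> Prop) : hat_open opn O V -> OY (hat_open opn O) V.
Proof.
  intro HV; split; auto. apply compact_space_closure, hat_compact_space.
Qed.

(* Around [x] in [O - trace A] take [N] inside a compact [K] inside [O]; the part of
   [A] lying in [K] is a compact subset of [O], hence closed in [X], so removing it
   from [N] leaves an open neighbourhood of [x] outside [A]. *)
Lemma hat_compact_inf_open (A : hat -> Prop) :
  is_compact (hat_open opn O) A -> A None -> opn (setminus O (trace A)).
Proof.
  intros HA HAN. apply (open_of_local_nbhd opn Htop). intros x [Ox nt].
  destruct (compact_nbhd_in_open opn O x Htop Hh Hlc HOo Ox)
    as [N [K [HN [HK [HNx [HNK HKO]]]]]].
  assert (HKh : is_compact (hat_open opn O) (fun p => A p /\ lift O K False p)).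
  { apply compact_inter_closed; auto. right. split; [simpl; auto |].
    assert (E : setminus O (trace (fun p => ~ lift O K False p)) = K).
    { apply pred_ext; intro y; unfold setminus, trace; simpl; split.
      - intros [Oy n]. apply NNPP; intro nK; apply n; exists Oy; auto.
      - intro Ky; split; auto. intros [h n]; auto. }
    rewrite E; auto. }
  assert (HC := compact_complement_open opn Htop _ Hh
                  (hat_compact_trace _ HKh (fun H => proj2 H))).
  exists (fun y => N y /\ ~ trace (fun p => A p /\ lift O K False p) y).
  split; [apply open_inter; auto |]. split.
  - split; auto. intros [h [HAp _]]. apply nt; exists h; auto.
  - intros y [Ny n]. split; [apply HKO, HNK; auto |]. intros [h HAy]. apply n.
    exists h; split; auto. simpl. apply HNK; auto.
Qed.

End OnePointCompactification.

Section HatMeasure.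

Context {X : Type} (opn : (X -> Prop) -> Prop) (tau : (X -> Prop) -> R) (O : X -> Prop).
Hypothesis Htop : is_topology opn.
Hypothesis Hhaus : hausdorff opn.
Hypothesis Hlc : locally_compact opn.
Hypothesis Htau : topological_measure opn tau.
Hypothesis HO : OY opn O.

Lemma OY_of_open_subset (U : X -> Prop) : opn U -> subset U O -> OY opn U.
Proof. intros HU HUO. split; auto. exact (compact_closure_subset opn O U Htop (proj2 HO) HUO). Qed.

Lemma tau_setminus_compact (K : X -> Prop) :
  is_compact opn K -> subset K O -> tau (setminus O K) = tau O - tau K.
Proof.
  intros HK HKO. destruct Htau as [_ [Hadd _]].
  assert (Hop : opn (setminus O K)).
  { unfold setminus. apply open_inter; auto; [apply HO | apply compact_complement_open; auto]. }
  assert (E : setU K (setminus O K) = O).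
  { apply pred_ext; intro x; unfold setU, setminus; split.
    - intros [Kx|[Ox _]]; auto.
    - intro Ox; destruct (classic (K x)); auto. }
  assert (Ha := Hadd K (setminus O K) (or_introl HK)
                  (or_intror (OY_of_open_subset _ Hop (setminus_subset O K)))).
  rewrite E in Ha. specialize (Ha (fun x Kx H => proj2 H Kx) (or_intror HO)). lra.
Qed.

Lemma tau_le_of_inner (A : X -> Prop) r : AY opn A ->
  (forall K, KY opn K -> subset K A -> tau K <= r) -> tau A <= r.
Proof.
  intros [HA|HA] H.
  - apply H; auto. intros x Hx; exact Hx.
  - apply (proj2 (proj2 (proj2 (proj2 (proj2 Htau))) A HA)).
    intros s [K [HK [HKA ->]]]. apply H; auto.
Qed.

(* Inner regularity reduces this to disjoint compact [K, K'], where [tau K + tau K']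
   is [tau (K + K') <= tau O]. *)
Lemma tau_disjoint_le (T C : X -> Prop) : AY opn T -> AY opn C ->
  subset T O -> subset C O -> disjoint T C -> tau T + tau C <= tau O.
Proof.
  intros HT HC HTO HCO Hd. destruct Htau as [_ [Hadd [Hmono _]]].
  cut (tau C <= tau O - tau T); [lra |].
  apply tau_le_of_inner; auto. intros K' HK' HK'C.
  cut (tau T <= tau O - tau K'); [lra |].
  apply tau_le_of_inner; auto. intros K HK HKT.
  assert (Hd' : disjoint K K') by (intros x Kx K'x; exact (Hd x (HKT x Kx) (HK'C x K'x))).
  assert (HU : KY opn (setU K K')) by (apply compact_setU; auto).
  cut (tau K + tau K' <= tau O); [lra |].
  rewrite <- (Hadd K K' (or_introl HK) (or_introl HK') Hd' (or_introl HU)).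
  apply Hmono; [left | right |]; auto.
  intros x [Kx|Kx]; [apply HTO, HKT | apply HCO, HK'C]; auto.
Qed.

Context (tauh : (option {x : X | O x} -> Prop) -> R).
Hypothesis H1 : forall U, opn U -> subset U O -> tauh (lift O U False) = tau U.
Hypothesis H2 : forall K, is_compact opn K -> subset K O -> tauh (lift O K False) = tau K.
Hypothesis H3 : forall K, is_compact opn K -> subset K O ->
  tauh (lift O (setminus O K) True) = tau (setminus O K).
Hypothesis H4 : forall U, opn U -> subset U O ->
  tauh (lift O (setminus O U) True) = tau O - tau U.

Notation hat_opn := (hat_open opn O).

Lemma tauh_compact_noinf A : KY hat_opn A -> ~ A None ->
  KY opn (trace A) /\ tauh A = tau (trace A).
Proof.
  intros HA HN. assert (HK := hat_compact_trace opn O Htop (proj1 HO) A HA HN). split; auto.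
  rewrite (lift_trace O A HN) at 1. apply H2; auto. apply trace_subset.
Qed.

Lemma tauh_open_noinf A : OY hat_opn A -> ~ A None ->
  opn (trace A) /\ tauh A = tau (trace A).
Proof.
  intros [HA _] HN. assert (Hop : opn (trace A)).
  { destruct HA as [[_ H]|[H _]]; [exact H | contradiction]. }
  split; auto. rewrite (lift_trace O A HN) at 1. apply H1; auto. apply trace_subset.
Qed.

Lemma tauh_compact_inf A : KY hat_opn A -> A None ->
  opn (setminus O (trace A)) /\ tauh A = tau O - tau (setminus O (trace A)).
Proof.
  intros HA HN. assert (Hop := hat_compact_inf_open opn O Htop Hhaus Hlc (proj1 HO) A HA HN).
  split; auto. rewrite (lift_trace_inf O A HN) at 1. apply H4; auto. apply setminus_subset.
Qed.

Lemma tauh_open_inf A : OY hat_opn A -> A None ->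
  KY opn (setminus O (trace A)) /\ tauh A = tau O - tau (setminus O (trace A)).
Proof.
  intros [HA _] HN. assert (HK : is_compact opn (setminus O (trace A))).
  { destruct HA as [[H _]|[_ H]]; [contradiction | exact H]. }
  split; auto. rewrite (lift_trace_inf O A HN) at 1. rewrite H3; auto.
  - apply tau_setminus_compact; auto. apply setminus_subset.
  - apply setminus_subset.
Qed.

Lemma tauh_cases A : AY hat_opn A ->
  (~ A None /\ AY opn (trace A) /\ tauh A = tau (trace A)) \/
  (A None /\ AY opn (setminus O (trace A)) /\ tauh A = tau O - tau (setminus O (trace A))).
Proof.
  intros HA. destruct (classic (A None)) as [HN|HN]; [right | left]; split; auto;
    destruct HA as [HA|HA].
  - destruct (tauh_compact_inf A HA HN) as [Hop E]. split; auto.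
    right; apply OY_of_open_subset; auto. apply setminus_subset.
  - destruct (tauh_open_inf A HA HN) as [HK E]. split; auto. left; auto.
  - destruct (tauh_compact_noinf A HA HN) as [HK E]. split; auto. left; auto.
  - destruct (tauh_open_noinf A HA HN) as [Hop E]. split; auto.
    right; apply OY_of_open_subset; auto. apply trace_subset.
Qed.

Lemma tauh_nonneg A : AY hat_opn A -> 0 <= tauh A.
Proof.
  intros HA. destruct Htau as [Hnn [_ [Hmono _]]].
  destruct (tauh_cases A HA) as [[_ [HT ->]]|[_ [HT ->]]]; auto.
  assert (tau (setminus O (trace A)) <= tau O).
  { apply Hmono; [| right |]; auto. apply setminus_subset. }
  lra.
Qed.

Lemma tauh_mono A A' : AY hat_opn A -> AY hat_opn A' -> subset A A' -> tauh A <= tauh A'.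
Proof.
  intros HA HA' Hs. destruct Htau as [_ [_ [Hmono _]]].
  destruct (tauh_cases A HA) as [[HN [HT ->]]|[HN [HT ->]]];
  destruct (tauh_cases A' HA') as [[HN' [HT' ->]]|[HN' [HT' ->]]].
  - apply Hmono; auto. intros x [h Hx]. exists h; auto.
  - cut (tau (trace A) + tau (setminus O (trace A')) <= tau O); [lra |].
    apply tau_disjoint_le; auto; [apply trace_subset | apply setminus_subset |].
    intros x [h Hx] [_ n]. apply n. exists h; auto.
  - exfalso; apply HN', Hs, HN.
  - cut (tau (setminus O (trace A')) <= tau (setminus O (trace A))); [lra |].
    apply Hmono; auto. intros x [Ox n]; split; auto. intros [h Hx]; apply n; exists h; auto.
Qed.

(* With [A] containing [oo], [O - A = (O - (A + A')) + A'] is a disjoint union in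
   [A(X)], so additivity of [tau] gives the claim. *)
Lemma tauh_additive_inf A A' : AY hat_opn A -> AY hat_opn A' -> disjoint A A' ->
  AY hat_opn (setU A A') -> A None -> ~ A' None -> tauh (setU A A') = tauh A + tauh A'.
Proof.
  intros HA HA' Hd HU HN HN'. destruct Htau as [_ [Hadd _]].
  destruct (tauh_cases A HA) as [[HN0 _]|[_ [HT ->]]]; [contradiction |].
  destruct (tauh_cases A' HA') as [[_ [HT' ->]]|[HN0 _]]; [| contradiction].
  destruct (tauh_cases _ HU) as [[HN0 _]|[_ [HTU ->]]]; [exfalso; apply HN0; left; auto |].
  assert (EC : setminus O (trace A) = setU (setminus O (trace (setU A A'))) (trace A')).
  { apply pred_ext; intro x; unfold setU, setminus; split.
    - intros [Ox n]. destruct (classic (trace A' x)) as [t|t]; [right; auto | left].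
      split; auto. intros [h [Hx|Hx]]; [apply n | apply t]; exists h; auto.
    - intros [[Ox n]|[h Hx]].
      + split; auto. intros [h Hx]; apply n; exists h; left; auto.
      + split; auto. intros [h' Hx']. apply (Hd _ Hx'). apply trace_Some. exists h; auto. }
  assert (Hdd : disjoint (setminus O (trace (setU A A'))) (trace A')).
  { intros x [Ox n] [h Hx]. apply n. exists h. right; auto. }
  rewrite EC in HT |- *. rewrite (Hadd _ _ HTU HT' Hdd HT). lra.
Qed.

Lemma tauh_additive : forall A A', AY hat_opn A -> AY hat_opn A' -> disjoint A A' ->
  AY hat_opn (setU A A') -> tauh (setU A A') = tauh A + tauh A'.
Proof.
  intros A A' HA HA' Hd HU. destruct Htau as [_ [Hadd _]].
  destruct (classic (A None)) as [HN|HN]; destruct (classic (A' None)) as [HN'|HN'].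
  - exfalso; exact (Hd None HN HN').
  - apply tauh_additive_inf; auto.
  - assert (Es : setU A A' = setU A' A) by (apply pred_ext; intro; unfold setU; tauto).
    rewrite Es in *. rewrite tauh_additive_inf; auto; [lra |].
    intros p H H'; exact (Hd p H' H).
  - destruct (tauh_cases A HA) as [[_ [HT ->]]|[HN0 _]]; [| contradiction].
    destruct (tauh_cases A' HA') as [[_ [HT' ->]]|[HN0 _]]; [| contradiction].
    destruct (tauh_cases _ HU) as [[_ [HTU ->]]|[[HN0|HN0] _]]; [| contradiction..].
    assert (ET : trace (setU A A') = setU (trace A) (trace A')).
    { apply pred_ext; intro x; unfold setU, trace; split.
      - intros [h [Hx|Hx]]; [left | right]; exists h; auto.
      - intros [[h Hx]|[h Hx]]; exists h; auto. }
    rewrite ET in HTU |- *. apply Hadd; auto.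
    intros x [h Hx] [h' Hx']. apply (Hd _ Hx). apply trace_Some. exists h'; auto.
Qed.

Lemma tauh_outer_compact_inf K b : KY hat_opn K -> K None ->
  (forall U, OY hat_opn U -> subset K U -> b <= tauh U) -> b <= tauh K.
Proof.
  intros HK HN Hb. destruct Htau as [_ [_ [_ [_ Hinner]]]].
  destruct (tauh_compact_inf K HK HN) as [Hop ->].
  cut (tau (setminus O (trace K)) <= tau O - b); [lra |].
  apply (proj2 (Hinner _ (OY_of_open_subset _ Hop (setminus_subset O _)))).
  intros r [K' [HK' [HK'U ->]]].
  assert (HK'O : subset K' O) by (intros x Hx; apply (setminus_subset O (trace K) x), HK'U, Hx).
  assert (Hbb : b <= tauh (lift O (setminus O K') True)).
  { apply Hb.
    - apply hat_open_OY; auto; [apply HO | apply hat_open_lift_co; auto].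
    - intros [[x h]|] Hp; simpl; auto. split; auto. intro Kx.
      destruct (HK'U x Kx) as [_ n]. apply n. exists h; auto. }
  rewrite H3, tau_setminus_compact in Hbb; auto. lra.
Qed.

Lemma tauh_outer_compact_noinf K b : KY hat_opn K -> ~ K None ->
  (forall U, OY hat_opn U -> subset K U -> b <= tauh U) -> b <= tauh K.
Proof.
  intros HK HN Hb. destruct Htau as [_ [_ [Hmono [Houter _]]]].
  destruct (tauh_compact_noinf K HK HN) as [HKc ->].
  apply (proj2 (Houter _ HKc)). intros r [U [HU [HKU ->]]].
  assert (HUO : opn (fun x => U x /\ O x)) by (apply (open_inter opn Htop); [apply HU | apply HO]).
  assert (Hbb : b <= tauh (lift O (fun x => U x /\ O x) False)).
  { apply Hb.
    - apply hat_open_OY; auto; [apply HO | apply hat_open_lift; auto; apply HO].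
    - intros [[x h]|] Hp; simpl; [| contradiction]. split; auto.
      apply HKU. exists h; auto. }
  rewrite H1 in Hbb; [| auto | intros x [_ Ox]; auto].
  assert (tau (fun x => U x /\ O x) <= tau U).
  { apply Hmono; [right | right |]; auto.
    - apply OY_of_open_subset; auto. intros x [_ Ox]; auto.
    - intros x [Ux _]; auto. }
  lra.
Qed.

Lemma tauh_inner_open_inf V b : OY hat_opn V -> V None ->
  (forall K, KY hat_opn K -> subset K V -> tauh K <= b) -> tauh V <= b.
Proof.
  intros HV HN Hb. destruct Htau as [_ [_ [Hmono [Houter _]]]].
  destruct (tauh_open_inf V HV HN) as [HK0 ->].
  cut (tau O - b <= tau (setminus O (trace V))); [lra |].
  apply (proj2 (Houter _ HK0)). intros r [U [HU [HKU ->]]].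
  assert (HUO : opn (fun x => U x /\ O x)) by (apply (open_inter opn Htop); [apply HU | apply HO]).
  assert (Hbb : tauh (lift O (setminus O (fun x => U x /\ O x)) True) <= b).
  { apply Hb.
    - apply compact_lift_co; auto. apply HO.
    - intros [[x h]|] Hp; simpl in *; auto. apply trace_Some.
      apply NNPP; intro nt. destruct Hp as [_ n]. apply n. split; auto.
      apply HKU. split; auto. }
  rewrite H4 in Hbb; [| auto | intros x [_ Ox]; auto].
  assert (tau (fun x => U x /\ O x) <= tau U).
  { apply Hmono; [right | right |]; auto.
    - apply OY_of_open_subset; auto. intros x [_ Ox]; auto.
    - intros x [Ux _]; auto. }
  lra.
Qed.

Lemma tauh_inner_open_noinf V b : OY hat_opn V -> ~ V None ->
  (forall K, KY hat_opn K -> subset K V -> tauh K <= b) -> tauh V <= b.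
Proof.
  intros HV HN Hb. destruct Htau as [_ [_ [_ [_ Hinner]]]].
  destruct (tauh_open_noinf V HV HN) as [Hop ->].
  apply (proj2 (Hinner _ (OY_of_open_subset _ Hop (trace_subset O V)))).
  intros r [K [HK [HKU ->]]].
  assert (HKO : subset K O) by (intros x Hx; apply (trace_subset O V), HKU, Hx).
  rewrite <- H2; auto. apply Hb.
  - apply compact_lift; auto. apply HO.
  - intros [[x h]|] Hp; simpl in *; [| contradiction]. apply trace_Some; auto.
Qed.

Lemma tauh_outer_regular : forall K, KY hat_opn K ->
  is_glb (fun r => exists U, OY hat_opn U /\ subset K U /\ r = tauh U) (tauh K).
Proof.
  intros K HK. split.
  - intros r [U [HU [HKU ->]]]. apply tauh_mono; [left | right |]; auto.
  - intros b Hb. assert (Hb' : forall U, OY hat_opn U -> subset K U -> b <= tauh U)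
      by (intros U HU HKU; apply Hb; eauto).
    destruct (classic (K None)).
    + apply tauh_outer_compact_inf; auto.
    + apply tauh_outer_compact_noinf; auto.
Qed.

Lemma tauh_inner_regular : forall V, OY hat_opn V ->
  is_lub (fun r => exists K, KY hat_opn K /\ subset K V /\ r = tauh K) (tauh V).
Proof.
  intros V HV. split.
  - intros r [K [HK [HKV ->]]]. apply tauh_mono; [left | right |]; auto.
  - intros b Hb. assert (Hb' : forall K, KY hat_opn K -> subset K V -> tauh K <= b)
      by (intros K HK HKV; apply Hb; eauto).
    destruct (classic (V None)).
    + apply tauh_inner_open_inf; auto.
    + apply tauh_inner_open_noinf; auto.
Qed.

End HatMeasure.

Theorem lemma2p2 (X : Type) (opn : (X -> Prop) -> Prop)
  (Htop : is_topology opn) (Hhaus : hausdorff opn) (Hlc : locally_compact opn)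
  (tau : (X -> Prop) -> R) (Htau : topological_measure opn tau)
  (O : X -> Prop) (HO : OY opn O)
  (tauh : (option {x : X | O x} -> Prop) -> R)
  (H1 : forall U, opn U -> subset U O -> tauh (lift O U False) = tau U)
  (H2 : forall K, is_compact opn K -> subset K O -> tauh (lift O K False) = tau K)
  (H3 : forall K, is_compact opn K -> subset K O ->
          tauh (lift O (setminus O K) True) = tau (setminus O K))
  (H4 : forall U, opn U -> subset U O ->
          tauh (lift O (setminus O U) True) = tau O - tau U) :
  topological_measure (hat_open opn O) tauh.
Proof.
  split; [| split; [| split; [| split]]].
  - intro; eapply tauh_nonneg; eassumption.
  - eapply tauh_additive; eassumption.
  - intros A A'; eapply tauh_mono; eassumption.
  - eapply tauh_outer_regular; eassumption.
  - eapply tauh_inner_regular; eassumption.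
Qed.
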